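(* Let $N\ge 2$ and $L\ge 2$ be integers. There is no bijection $h:\mathbb{Z}/N^L\mathbb{Z}\to(\mathbb{Z}/N\mathbb{Z})^L$ together with a binary operation $g:\mathbb{Z}/N\mathbb{Z}\times\mathbb{Z}/N\mathbb{Z}\to\mathbb{Z}/N\mathbb{Z}$ such that $h(ab)_i=g(h(a)_i,h(b)_i)$ for all $a,b\in\mathbb{Z}/N^L\mathbb{Z}$ and all $i\in\{1,\ldots,L\}$ (here $ab$ is the product in the ring $\mathbb{Z}/N^L\mathbb{Z}$ and $h(a)_i$ the $i$-th coordinate of $h(a)$). *)

From mathcomp Require Import all_boot all_order all_algebra.
Set Implicit Arguments. Unset Strict Implicit. Unset Printing Implicit Defensive.

From mathcomp Require Import all_boot all_order all_algebra.
Set Implicit Arguments. Unset Strict Implicit. Unset Printing Implicit Defensive.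

(* Since 0 is absorbing, all coordinates of h 0 coincide, and h maps the
   nilpotent elements (a ^+ (L * N) = 0) of Z/N^L onto the functions whose
   coordinates all lie in one subset T of Z/N; so there are #|T|^L of them.
   But the nilpotents are the multiples of the radical rad N, so there are
   N^L / rad N of them.  Comparing p-adic valuations in #|T|^L * rad N = N^L
   at a prime p dividing N gives L * x + 1 = L * y, impossible for L >= 2. *)

Lemma dvdn_logn m n : 0 < m -> 0 < n ->
  (forall p, prime p -> logn p m <= logn p n) -> m %| n.
Proof.
move=> m_gt0 n_gt0 le_logn.
suff <- : gcdn m n = m by apply: dvdn_gcdr.
apply: eqn_from_log; rewrite ?gcdn_gt0 ?m_gt0 // => p.
rewrite logn_gcd //; have [/le_logn/minn_idPl // | p_nprime] := boolP (prime p).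
by rewrite /logn (negbTE p_nprime).
Qed.

Definition rad n := \prod_(p <- primes n) p.

Lemma rad_gt0 n : 0 < rad n.
Proof.
rewrite /rad big_seq prodn_cond_gt0 // => p.
by rewrite mem_primes => /andP[/prime_gt0].
Qed.

Lemma logn_prod_primes (s : seq nat) q : uniq s -> all prime s ->
  logn q (\prod_(p <- s) p) = (q \in s).
Proof.
elim: s => [|x s IHs] /=; first by rewrite big_nil logn1.
move=> /andP[x_notin_s s_uniq] /andP[x_prime s_prime].
have s_gt0 : 0 < \prod_(p <- s) p.
  by rewrite big_seq prodn_cond_gt0 // => p /(allP s_prime)/prime_gt0.
rewrite big_cons lognM ?(prime_gt0 x_prime) // IHs // logn_prime // in_cons.
by case: eqVneq => [->|]; rewrite ?(negbTE x_notin_s).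
Qed.

Lemma logn_rad p n : logn p (rad n) = (p \in primes n).
Proof. exact: logn_prod_primes (primes_uniq n) (all_prime_primes n). Qed.

Lemma dvdn_rad_exp n : 0 < n -> n %| rad n ^ n.
Proof.
move=> n_gt0; apply: dvdn_logn; rewrite ?expn_gt0 ?rad_gt0 // => p p_prime.
rewrite lognX logn_rad; case: (boolP (p \in primes n)) => [_ | p_notin_n].
  by rewrite muln1 ltnW // ltn_logl.
by move: p_notin_n; rewrite -logn_gt0 -eqn0Ngt => /eqP->.
Qed.

Lemma rad_dvdn_primes n a : {in primes n, forall p, p %| a} -> rad n %| a.
Proof.
have [-> _ | a_gt0 dvd_a] := posnP a; first exact: dvdn0.
apply: dvdn_logn; rewrite ?rad_gt0 // => p p_prime.
rewrite logn_rad; case: (boolP (p \in primes n)) => // /dvd_a p_dvd_a.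
by rewrite logn_gt0 mem_primes p_prime a_gt0.
Qed.

Lemma dvdn_rad n : rad n %| n.
Proof. by apply: rad_dvdn_primes => p; rewrite mem_primes => /and3P[]. Qed.

Lemma dvdn_expM_rad n k a : 0 < n -> 0 < k ->
  (n ^ k %| a ^ (k * n)) = (rad n %| a).
Proof.
move=> n_gt0 k_gt0; apply/idP/idP => [dvd_pow | /(dvdn_exp2r (k * n))].
  apply: rad_dvdn_primes => p; rewrite mem_primes => /and3P[p_prime _ p_dvd_n].
  have := dvdn_trans (dvdn_exp k_gt0 p_dvd_n) dvd_pow.
  by rewrite Euclid_dvdX // => /andP[].
apply: dvdn_trans; rewrite mulnC expnM; apply: dvdn_exp2r.
exact: dvdn_rad_exp.
Qed.

Lemma card_ord_dvdn M r : r %| M -> #|[pred i : 'I_M | r %| i]| = M %/ r.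
Proof.
move=> r_dvd_M.
have -> : #|[pred i : 'I_M | r %| i]| = \sum_(0 <= i < M) (r %| i).
  rewrite big_mkord -sum1_card big_mkcond; apply: eq_bigr => i _.
  by rewrite inE; case: (r %| i).
rewrite divn_count_dvd big_add1 /=; apply: (@addnI (r %| 0)).
rewrite -(big_nat_recl _ _ (fun i => nat_of_bool (r %| i))) // big_nat_recr //=.
by rewrite dvdn0 r_dvd_M addnC.
Qed.

Lemma expn_mul_rad_neq n L t : 1 < n -> 1 < L -> t ^ L * rad n != n ^ L.
Proof.
move=> n_gt1 L_gt1; have n_gt0 := ltnW n_gt1; apply/eqP => E.
have t_gt0 : 0 < t.
  rewrite lt0n; apply/eqP => t0; move: E; rewrite t0 exp0n 1?ltnW // mul0n => /esym/eqP.
  by rewrite expn_eq0 -leqn0 leqNgt n_gt0.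
have p_prime := pdiv_prime n_gt1.
have p_in_n : pdiv n \in primes n by rewrite mem_primes p_prime n_gt0 pdiv_dvd.
move/(congr1 (logn (pdiv n))): E.
rewrite lognM ?expn_gt0 ?t_gt0 ?rad_gt0 // !lognX logn_rad p_in_n.
by move/(congr1 (modn^~ L)); rewrite mulnC modnMDl modnMr modn_small.
Qed.

Import GRing.Theory.
Local Open Scope ring_scope.

Lemma Zp_expr_eq0 M (a : 'Z_M) k : (1 < M)%N -> (a ^+ k == 0) = (M %| a ^ k)%N.
Proof.
move=> M_gt1; have -> : a ^+ k = (a ^ k)%N%:R by rewrite natrX natr_Zp.
by rewrite -val_eqE /= val_Zp_nat.
Qed.

Lemma card_Zp_nilpotent N L : (1 < N)%N -> (0 < L)%N ->
  #|[pred a : 'Z_(N ^ L) | a ^+ (L * N) == 0]| = (N ^ L %/ rad N)%N.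
Proof.
move=> N_gt1 L_gt0; have N_gt0 := ltnW N_gt1.
have M_gt1 : (1 < N ^ L)%N.
  by rewrite (leq_trans N_gt1) // -{1}(expn1 N) leq_pexp2l.
rewrite -card_ord_dvdn ?dvdn_exp ?dvdn_rad //.
rewrite -[in RHS](Zp_cast M_gt1); apply: eq_card => a.
by rewrite !inE Zp_expr_eq0 // dvdn_expM_rad.
Qed.

Section CoordinatewiseMultiplication.

Variables (R : finPzSemiRingType) (I C : finType).
Variables (h : R -> {ffun I -> C}) (g : C -> C -> C).
Hypothesis h_bij : bijective h.
Hypothesis h_mul : forall a b i, h (a * b) i = g (h a i) (h b i).

Lemma coord_zero_const i j : h 0 i = h 0 j.
Proof.
have [h' _ hK'] := h_bij.
have := h_mul (h' [ffun=> h 0 j]) 0 i; rewrite mulr0 hK' ffunE => ->.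
by have := h_mul 0 (h' [ffun=> h 0 i]) j; rewrite mul0r hK' ffunE.
Qed.

Lemma coord_exprS a k i : h (a ^+ k.+1) i = iter k (g (h a i)) (h a i).
Proof. by elim: k => [|k IHk]; rewrite ?expr1 // exprS h_mul IHk. Qed.

Lemma card_nilpotent_coord (i0 : I) k :
  #|[pred a : R | a ^+ k.+1 == 0]| =
    (#|[pred x | iter k (g x) x == h 0%R i0]| ^ #|I|)%N.
Proof.
have [h' hK hK'] := h_bij; have h_inj := can_inj hK.
rewrite -card_ffun_on -(card_image h_inj); apply: eq_card => f.
rewrite -{1}(hK' f) mem_image // !inE; apply/eqP/ffun_onP => [f0 i | f_T].
  by rewrite -(hK' f) inE -coord_exprS f0 (coord_zero_const i i0).
apply: h_inj; apply/ffunP => i.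
by rewrite coord_exprS hK' (coord_zero_const i i0); apply/eqP; have := f_T i.
Qed.

End CoordinatewiseMultiplication.

Theorem mainTheorem16 (N L : nat) (hN : (2 <= N)%N) (hL : (2 <= L)%N) :
  ~ exists (h : 'Z_(N ^ L) -> {ffun 'I_L -> 'Z_N}) (g : 'Z_N -> 'Z_N -> 'Z_N),
      bijective h /\
      (forall (a b : 'Z_(N ^ L)) (i : 'I_L), h (a * b) i = g (h a i) (h b i)).
Proof.
move=> [h [g [h_bij h_mul]]].
have L_gt0 : (0 < L)%N by apply: ltnW.
have LN_gt0 : (0 < L * N)%N by rewrite muln_gt0 L_gt0 ltnW.
have := card_nilpotent_coord h_bij h_mul (Ordinal L_gt0) (L * N).-1.
rewrite prednK // card_Zp_nilpotent // card_ord => card_T.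
have rad_dvd_M : (rad N %| N ^ L)%N by rewrite dvdn_exp ?dvdn_rad.
move/(congr1 (muln^~ (rad N))): card_T; rewrite divnK // => /esym/eqP.
exact/negP/expn_mul_rad_neq.
Qed.
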